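(* Let $n\ge2$, let $X\subset\mathbb{R}^n$ be finite with the Euclidean metric $d$, let $k\in\mathbb{N}$, and fix an increasing sequence $0=\epsilon_0<\epsilon_1<\epsilon_2<\cdots$. Let $i\in\mathbb{N}$. For every $\alpha$ with $\epsilon_{i-1}<\alpha\le\epsilon_i$: (1) $E(H(i)_\alpha)\subset E(G(X,\rho^X)_\alpha)$; (2) if $(p,q)\in E(G(X,\rho^X)_\alpha)$, then there is a path in $H(i)_\alpha$ joining $p$ and $q$.
   Context: DBSCAN$^*$: for $Y\subset X$ and $\epsilon>0$, $\mathcal{C}(Y,\epsilon)=\{p\in Y:|\{y\in Y:d(p,y)\le\epsilon\}|>k\}$, $\mathcal{N}(Y,\epsilon)=Y\setminus\mathcal{C}(Y,\epsilon)$, and $\mathcal{D}^*(Y,\epsilon)$ is the set of vertex sets of the connected components of the graph with vertex set $\mathcal{C}(Y,\epsilon)$ and an edge between distinct $p,q$ whenever $d(p,q)\le\epsilon$. For $Z\subset X$ and $p\in Z$, $\operatorname{core}^Z_k(p)$ is the distance from $p$ to a $k$-th nearest neighbour of $p$ in $Z$ (the $k$-th smallest value of $d(p,z)$, $z\in Z\setminus\{p\}$, with multiplicity) and $\rho^Z(p,q)=\max\{\operatorname{core}^Z_k(p),\operatorname{core}^Z_k(q),d(p,q)\}$ for $p\ne q$, $\rho^Z(p,p)=0$. Cubes (for a given $\epsilon>0$): $\mathcal{Q}(\epsilon)$ is the collection of closed cubes $\{x\in\mathbb{R}^n: j_i\frac{\epsilon}{2\sqrt n}\le x_i\le (j_i+1)\frac{\epsilon}{2\sqrt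 n}\}$, $j\in\mathbb{Z}^n$; $S^m=\{x:\max_i|x_i-s_i|\le m\frac{\epsilon}{2\sqrt n}\text{ for some }s\in S\}$; $\mathcal{I}(B)=\{S\in\mathcal{Q}(\epsilon):S\cap B\ne\emptyset\}$. For $A\subset X$, $S\in\mathcal{I}(A)$ is an interior cube of $A$ if $S^1\cap X\subset A$ and every $T\in\mathcal{Q}(\epsilon)$ with $T\subset S^1$ lies in $\mathcal{I}(A)$, otherwise a boundary cube; $\partial A$ is the union of boundary cubes. For $Z\subset\mathbb{R}^n$, integer $N\ge0$: $Z^N=\bigcup_{S\in\mathcal{I}(Z)}S^N$, $Z^N_C=Z^N\cap C$. $\mathfrak{n},\mathfrak{m}$ are the smallest integers with $\mathfrak{n}\ge\sqrt n-1$, $\mathfrak{m}\ge2\sqrt n$; $\mathfrak{N}=\mathfrak{n}+\mathfrak{m}$. $F(Y,\epsilon)=\bigcup_{C\in\mathcal{D}^*(Y,\epsilon)}(\partial C)^{\mathfrak{N}}_C\cup\mathcal{N}(Y,\epsilon)$, cubes in $\mathcal{Q}(\epsilon)$. Graphs: $G(Z,w)$ is the complete weighted graph on finite $Z$ with weights $w(p,q)$; for a weighted graph $G$ and $\alpha\ge0$, $G_\alpha$ has the same vertices and only the edges of weight $\le\alpha$; $E(G)$ is the edge set. The union $G\cup H$ of weighted graphs has vertex set $V(G)\cup V(H)$, edge set $E(G)\cup E(H)$, and weight on a common edge the minimum of the two weights. Construction: $X_1=X$, $X_{i+1}=F(X_i,\epsilon_i)$ for $i\ge1$; $H(0)$ is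 the graph on $X_1$ with no edges; for $i\ge0$, $H(i+1)=\bigcup_{C\in\mathcal{D}^*(X_{i+1},\epsilon_{i+1})}G\big(B_{\epsilon_{i+1}}(C),\rho^{B_{\epsilon_{i+1}}(C)}\big)_{\epsilon_{i+1}}\cup H(i)$, where $B_{\epsilon_{i+1}}(C)=\{y\in X_{i+1}: d(y,C)\le\epsilon_{i+1}\}$. *)

From HB Require Import structures.
From mathcomp Require Import all_boot all_order all_algebra.
From mathcomp Require Import finmap.
From mathcomp Require Import boolp reals constructive_ereal.
Set Implicit Arguments.
Unset Strict Implicit.
Unset Printing Implicit Defensive.
Import Order.TTheory GRing.Theory Num.Theory.
Local Open Scope ring_scope.
Local Open Scope fset_scope.

Section DBSCAN.
Variables (R : realType) (n : nat).
Local Notation P := 'rV[R]_n.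

Definition dist (x y : P) : R := Num.sqrt (\sum_(i < n) (x 0 i - y 0 i) ^+ 2).

Definition side (e : R) : R := e / (2 * Num.sqrt (n%:R)).

Definition in_cube (e : R) (j : 'I_n -> int) (x : P) : Prop :=
  forall i, (j i)%:~R * side e <= x 0 i <= (j i + 1)%:~R * side e.

Definition in_thick (e : R) (j : 'I_n -> int) (m : R) (x : P) : Prop :=
  exists s : P, in_cube e j s /\
    forall i, `|x 0 i - s 0 i| <= m * side e.

Definition meets (e : R) (j : 'I_n -> int) (B : P -> Prop) : Prop :=
  exists x, B x /\ in_cube e j x.

Definition interior_cube (X : {fset P}) (e : R) (A : {fset P})
    (j : 'I_n -> int) : Prop :=
  [/\ meets e j (fun x => x \in A),
      (forall x, x \in X -> in_thick e j 1 x -> x \in A) &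
      (forall t : 'I_n -> int, (forall x, in_cube e t x -> in_thick e j 1 x) ->
          meets e t (fun x => x \in A))].

Definition boundary_cube (X : {fset P}) (e : R) (A : {fset P})
    (j : 'I_n -> int) : Prop :=
  meets e j (fun x => x \in A) /\ ~ interior_cube X e A j.

Definition in_boundary (X : {fset P}) (e : R) (A : {fset P}) (z : P) : Prop :=
  exists j, boundary_cube X e A j /\ in_cube e j z.

Definition in_thicken (e : R) (Z : P -> Prop) (N : R) (x : P) : Prop :=
  exists j, meets e j Z /\ in_thick e j N x.

Definition frak_n : int := Num.ceil (Num.sqrt (n%:R) - 1 : R).
Definition frak_m : int := Num.ceil (2 * Num.sqrt (n%:R) : R).
Definition frak_N : int := frak_n + frak_m.

Variable k : nat.

Definition core_pts (Y : {fset P}) (e : R) : {fset P} :=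
  [fset p in Y | (k < #|` [fset y in Y | (dist p y <= e)%R]|)%N].

Definition noise (Y : {fset P}) (e : R) : {fset P} := Y `\` core_pts Y e.

Definition core_edge (Y : {fset P}) (e : R) : rel P :=
  fun a b => [&& a \in core_pts Y e, b \in core_pts Y e, a != b & dist a b <= e].

Definition reach (Y : {fset P}) (e : R) (p q : P) : Prop :=
  exists s : seq P, path (core_edge Y e) p s /\ last p s = q.

Definition component (Y : {fset P}) (e : R) (p : P) : {fset P} :=
  [fset q in core_pts Y e | `[< reach Y e p q >]].

Definition components (Y : {fset P}) (e : R) : {fset {fset P}} :=
  [fset component Y e p | p in core_pts Y e].

(* F(Y, eps); X is the ambient data set (used in the notion of interior cube).
   Every piece of the union is a subset of Y, so we filter Y. *)
Definition Fset (X Y : {fset P}) (e : R) : {fset P} :=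
  [fset x in Y | `[< x \in noise Y e \/
      exists C, C \in components Y e /\ x \in C /\
        in_thicken e (in_boundary X e C) (frak_N%:~R) x >]].

(* core^Z_k(p): k-th smallest distance from p to Z \ {p} (with multiplicity);
   +oo if Z \ {p} has fewer than k points; 0 when k = 0. *)
Definition core_dist (Z : {fset P}) (p : P) : \bar R :=
  let ds := sort <=%R [seq dist p z | z <- enum_fset Z & z != p] in
  if k == 0%N then 0%E
  else if (k <= size ds)%N then (nth 0 ds k.-1)%:E else +oo%E.

Definition rho (Z : {fset P}) (p q : P) : \bar R :=
  if p == q then 0%E
  else Order.max (Order.max (core_dist Z p) (core_dist Z q)) (dist p q)%:E.

Variables (X : {fset P}) (eps : nat -> R).

(* Xs j = X_{j+1} :  X_1 = X,  X_{j+2} = F(X_{j+1}, eps_{j+1}) *)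
Fixpoint Xs (j : nat) : {fset P} :=
  match j with
  | 0 => X
  | j'.+1 => Fset X (Xs j') (eps j)
  end.

Definition ballC (Y C : {fset P}) (e : R) : {fset P} :=
  [fset y in Y | has (fun c => dist y c <= e) (enum_fset C)].

(* Weighted graphs on the vertex set X are encoded by a weight function;
   weight +oo means "no edge".  Weight of (p,q) in G(Z, rho^Z)_e : *)
Definition gw (Z : {fset P}) (e : R) (p q : P) : \bar R :=
  if [&& p \in Z, q \in Z, p != q & (rho Z p q <= e%:E)%E] then rho Z p q
  else +oo%E.

(* Hw i = weight function of H(i); union of graphs = minimum of weights *)
Fixpoint Hw (i : nat) : P -> P -> \bar R :=
  match i with
  | 0 => fun _ _ => +oo%E
  | i'.+1 => fun p q =>
      Order.min (Hw i' p q)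
        (foldr (fun C acc => Order.min (gw (ballC (Xs i') C (eps i)) (eps i) p q) acc)
               +oo%E (enum_fset (components (Xs i') (eps i))))
  end.

Definition H_edge (i : nat) (alpha : R) : rel P :=
  fun p q => [&& p \in X, q \in X, p != q & (Hw i p q <= alpha%:E)%E].

Definition G_edge (alpha : R) : rel P :=
  fun p q => [&& p \in X, q \in X, p != q & (rho X p q <= alpha%:E)%E].

End DBSCAN.

(* Part (1): an edge of H(i) is an edge of some G(B, rho^B) with B a subset of X, and
   rho^B >= rho^X because core distances can only shrink when points are added.
   Part (2): let rho^X(p, q) <= alpha.  If p and q both survive in X_i with core
   distance at most alpha there, they lie in one component C of D*(X_i, eps_i) and are
   adjacent in G(B(C), rho)_alpha.  Otherwise some point y removed at an earlier level l
   has p in its component C and d(p, y) <= eps_(l+1): y is p itself, or a removed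
   neighbour of p within its core distance.  A removed core point sits at least frak_N
   cubes inside the boundary of C, so C contains every data point within frak_N + 2 cubes
   of y, and every point of that box is within one cube of C.  Hence either q is in C,
   which is connected in H(l+1)_alpha, or the segment from p to q leaves the box close to
   a point z of C with d(z, q) < d(p, q); recursion on (z, q) terminates because X has
   finitely many pairs. *)

From HB Require Import structures.
From mathcomp Require Import all_boot all_order all_algebra.
From mathcomp Require Import finmap.
From mathcomp Require Import boolp reals constructive_ereal.
From mathcomp Require Import ring lra zify.
Import Order.TTheory GRing.Theory Num.Theory.
Local Open Scope ring_scope.

Section Euclid.
Context {R : realType} {n : nat}.
Local Notation P := 'rV[R]_n.

Lemma cauchy_schwarz (a b : 'I_n -> R) :
  (\sum_i a i * b i) ^+ 2 <= (\sum_i a i ^+ 2) * (\sum_i b i ^+ 2).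
Proof.
set A := \sum_i a i ^+ 2; set B := \sum_i b i ^+ 2; set S := \sum_i a i * b i.
have A0 : 0 <= A by apply: sumr_ge0 => i _; exact: sqr_ge0.
have [A00|Ap] := eqVneq A 0.
  have ai0 i : a i = 0.
    move/eqP: A00; rewrite psumr_eq0 => [/allP/(_ i (mem_index_enum i))|j _].
      by rewrite /= sqrf_eq0 => /eqP.
    exact: sqr_ge0.
  rewrite (_ : S = 0) ?expr0n ?A00 ?mul0r // /S big1 // => i _.
  by rewrite ai0 mul0r.
have E : \sum_i (A * b i - S * a i) ^+ 2 = A * (A * B - S ^+ 2).
  transitivity (\sum_i (A ^+ 2 * b i ^+ 2 - (2 * A * S) * (a i * b i) + S ^+ 2 * a i ^+ 2)).
    by apply: eq_bigr => i _; ring.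
  rewrite big_split /= sumrB -!mulr_sumr -/A -/B -/S; ring.
have : 0 <= A * (A * B - S ^+ 2).
  by rewrite -E; apply: sumr_ge0 => i _; exact: sqr_ge0.
by rewrite pmulr_rge0 ?subr_ge0 // lt_def Ap.
Qed.

Lemma minkowski (a b : 'I_n -> R) :
  Num.sqrt (\sum_i (a i + b i) ^+ 2) <=
  Num.sqrt (\sum_i a i ^+ 2) + Num.sqrt (\sum_i b i ^+ 2).
Proof.
set A := \sum_i a i ^+ 2; set B := \sum_i b i ^+ 2; set S := \sum_i a i * b i.
have A0 : 0 <= A by apply: sumr_ge0 => i _; exact: sqr_ge0.
have B0 : 0 <= B by apply: sumr_ge0 => i _; exact: sqr_ge0.
have E : \sum_i (a i + b i) ^+ 2 = A + 2 * S + B.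
  transitivity (\sum_i (a i ^+ 2 + 2 * (a i * b i) + b i ^+ 2)).
    by apply: eq_bigr => i _; ring.
  by rewrite !big_split /= -mulr_sumr.
have HS : S <= Num.sqrt A * Num.sqrt B.
  rewrite -sqrtrM //; apply: le_trans (ler_norm S) _.
  by rewrite -sqrtr_sqr ler_wsqrtr // cauchy_schwarz.
rewrite -[_ + _]ger0_norm ?addr_ge0 ?sqrtr_ge0 // -sqrtr_sqr.
by apply: ler_wsqrtr; rewrite E sqrrD !sqr_sqrtr //; lra.
Qed.

Lemma dist_ge0 (x y : P) : 0 <= dist x y.
Proof. exact: sqrtr_ge0. Qed.

Lemma distC (x y : P) : dist x y = dist y x.
Proof. by rewrite /dist; congr Num.sqrt; apply: eq_bigr => i _; ring. Qed.

Lemma dist_xx (x : P) : dist x x = 0.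
Proof. by rewrite /dist big1 ?sqrtr0 // => i _; rewrite subrr expr0n. Qed.

Lemma dist_triangle (x y z : P) : dist x z <= dist x y + dist y z.
Proof.
rewrite /dist; have := minkowski (fun i => x 0 i - y 0 i) (fun i => y 0 i - z 0 i).
by under eq_bigr do rewrite subrKA.
Qed.

Lemma coord_le_dist (x y : P) i : `|x 0 i - y 0 i| <= dist x y.
Proof.
rewrite /dist -sqrtr_sqr ler_wsqrtr // (bigD1 i) //= lerDl.
by apply: sumr_ge0 => j _; exact: sqr_ge0.
Qed.

Lemma dist_le_coord {x y : P} {c : R} : 0 <= c ->
  (forall i, `|x 0 i - y 0 i| <= c) -> dist x y <= Num.sqrt n%:R * c.
Proof.
move=> c0 H; rewrite /dist -(ger0_norm c0) -sqrtr_sqr -sqrtrM ?ler0n //.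
apply: ler_wsqrtr; apply: le_trans (_ : \sum_(i < n) c ^+ 2 <= _).
  apply: ler_sum => i _; have := H i; rewrite ler_norml => /andP[h1 h2]; nra.
by rewrite sumr_const card_ord mulr_natl.
Qed.

Definition segment (a b : P) (l : R) : P := \row_i (a 0 i + l * (b 0 i - a 0 i)).

Lemma segment_coord (a b : P) l i : 0 <= l ->
  `|segment a b l 0 i - a 0 i| <= l * dist a b.
Proof.
move=> l0; rewrite /segment mxE addrAC subrr add0r normrM ger0_norm //.
by rewrite ler_wpM2l // distrC coord_le_dist.
Qed.

Lemma dist_segment (a b : P) l : 0 <= l <= 1 ->
  dist (segment a b l) b = (1 - l) * dist a b.
Proof.
case/andP=> l0 l1; rewrite /dist.
rewrite -(ger0_norm (_ : 0 <= 1 - l)); last by lra.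
rewrite -sqrtr_sqr -sqrtrM ?sqr_ge0 // mulr_sumr; congr Num.sqrt.
by apply: eq_bigr => i _; rewrite /segment mxE; ring.
Qed.

End Euclid.

Section SortedNth.
Context {d : Order.disp_t} {T : orderType d} (x0 : T).
Implicit Types (s : seq T) (j : nat).
Local Open Scope order_scope.

Lemma sorted_count_lt_nth {s} j : sorted <=%O s -> (count (< nth x0 s j) s <= j)%N.
Proof. by move=> ss; rewrite leqNgt; apply/negP => /(nth_count_lt x0 ss); rewrite ltxx. Qed.

Lemma sorted_count_le_nth {s j} : sorted <=%O s -> (j < size s)%N ->
  (j < count (<= nth x0 s j) s)%N.
Proof.
move=> ss js; rewrite -[in X in count _ X](cat_take_drop j.+1 s) count_cat.
have sz : size (take j.+1 s) = j.+1 by rewrite size_takel.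
rewrite (eq_in_count (a1 := (<= _)) (a2 := predT)) ?count_predT ?sz ?ltn_addr //.
move=> y /(nthP x0) [m]; rewrite sz => ms <-.
by rewrite nth_take //; apply: (sorted_leq_nth le_trans lexx) => //; rewrite inE (leq_trans ms).
Qed.

End SortedNth.

Section CoreDistance.
Local Open Scope fset_scope.
Context {R : realType} {n k : nat}.
Local Notation P := 'rV[R]_n.
Implicit Types (Y Z W : {fset P}) (p q : P).

Lemma card_fset_count (A : {fset P}) (Q : pred P) :
  #|` [fset z in A | Q z]| = count Q (enum_fset A).
Proof.
have -> : [fset z in A | Q z] = [fset z in [seq z <- enum_fset A | Q z]].
  by apply/fsetP => z; rewrite !inE mem_filter andbC.
by rewrite card_fseq undup_id ?size_filter // filter_uniq // fset_uniq.
Qed.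

Definition dists Z p := sort <=%R [seq dist p z | z <- enum_fset Z & z != p].

Lemma dists_sorted Z p : sorted <=%R (dists Z p).
Proof. exact/sort_sorted/le_total. Qed.

Lemma count_dists Z p (T : pred R) :
  count T (dists Z p) = #|` [fset z in Z | (z != p) && T (dist p z)]|.
Proof.
rewrite (permP (permEl (perm_sort _ _))) count_map count_filter card_fset_count.
by apply: eq_count => z /=; rewrite andbC.
Qed.

Lemma core_distE Z p : core_dist k Z p =
  if k == 0%N then 0%E
  else if (k <= size (dists Z p))%N then (nth 0 (dists Z p) k.-1)%:E else +oo%E.
Proof. by []. Qed.

Lemma core_dist_le Z p (r : R) : 0 <= r ->
  (k <= #|` [fset z in Z | (z != p) && (dist p z <= r)%R]|)%N ->
  (core_dist k Z p <= r%:E)%E.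
Proof.
move=> r0 H; rewrite core_distE; case: eqP => [_|/eqP k0]; first by rewrite lee_fin.
have k1 : (k.-1 < count (<= r) (dists Z p))%N by rewrite count_dists prednK ?lt0n.
have ks := leq_trans k1 (count_size _ _).
by rewrite prednK ?lt0n // in ks; rewrite ks lee_fin (nth_count_le _ (dists_sorted Z p) k1).
Qed.

Lemma core_distP {Z p} {a : R} : k != 0%N -> (core_dist k Z p <= a%:E)%E ->
  exists r, [/\ core_dist k Z p = r%:E, 0 <= r, r <= a,
    (k <= #|` [fset z in Z | (z != p) && (dist p z <= r)%R]|)%N &
    (#|` [fset z in Z | (z != p) && (dist p z < r)%R]| <= k.-1)%N].
Proof.
move=> k0; rewrite core_distE (negbTE k0).
case: ifP => [ks|_]; last by rewrite leye_eq.
have ks' : (k.-1 < size (dists Z p))%N by rewrite prednK ?lt0n.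
set r := nth 0 (dists Z p) k.-1; rewrite lee_fin => ra.
have kr : (k <= #|` [fset z in Z | (z != p) && (dist p z <= r)%R]|)%N.
  by have := sorted_count_le_nth 0 (dists_sorted Z p) ks'; rewrite count_dists prednK ?lt0n.
exists r; split => //; last by have := sorted_count_lt_nth 0 k.-1 (dists_sorted Z p); rewrite count_dists.
have : (0 < #|` [fset z in Z | (z != p) && (dist p z <= r)%R]|)%N.
  by rewrite (leq_trans _ kr) // lt0n.
by rewrite cardfs_gt0 => /fset0Pn [z]; rewrite !inE => /and3P[_ _ /(le_trans (dist_ge0 _ _))].
Qed.

Lemma core_dist_le_ball Y W p (a : R) : 0 <= a ->
  (core_dist k Y p <= a%:E)%E ->
  (forall z, z \in Y -> dist p z <= a -> z \in W) ->
  (core_dist k W p <= a%:E)%E.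
Proof.
move=> a0 H YW; have [k0|k0] := eqVneq k 0%N; first by rewrite core_distE k0 lee_fin.
have [r [_ r0 ra kr _]] := core_distP k0 H.
apply: le_trans (_ : r%:E <= a%:E)%E; last by rewrite lee_fin.
apply: core_dist_le => //; apply: leq_trans kr (fsubset_leq_card _).
apply/fsubsetP => z; rewrite !inE => /and3P[zY zp dz].
by rewrite zp dz YW ?(le_trans dz).
Qed.

Lemma core_distS {Z W p} : Z `<=` W -> (core_dist k W p <= core_dist k Z p)%E.
Proof.
move=> /fsubsetP ZW; case E: (core_dist k Z p) => [r| |]; last 2 first.
- exact: leey.
- by move: E; rewrite core_distE; case: ifP => // _; case: ifP.
have r0 : 0 <= r.
  have [k0|k0] := eqVneq k 0%N; first by move: E; rewrite core_distE k0 => -[<-].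
  have Er : (core_dist k Z p <= r%:E)%E by rewrite E.
  by have [r' [+ r'0 _ _ _]] := core_distP k0 Er; rewrite E => -[->].
by apply: (core_dist_le_ball Z W p r r0) => [|z /ZW]; rewrite ?E.
Qed.

Lemma core_pts_dist {Y p} {e : R} : 0 <= e -> p \in core_pts k Y e ->
  (core_dist k Y p <= e%:E)%E.
Proof.
rewrite !inE => e0 /andP[pY Hc]; apply: core_dist_le => //.
set A := [fset y in Y | dist p y <= e] in Hc.
have : (k <= #|` A `\ p|)%N.
  by move: Hc; rewrite (cardfsD1 p A); case: (p \in A) => /=; lia.
move/leq_trans; apply; apply: fsubset_leq_card; apply/fsubsetP => z.
by rewrite !inE => /and3P[-> -> ->].
Qed.

Lemma dist_core_pts {Y p} {e : R} : p \in Y -> (core_dist k Y p <= e%:E)%E ->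
  p \in core_pts k Y e.
Proof.
move=> pY H; rewrite !inE pY /=.
have [k0|k0] := eqVneq k 0%N.
  move: H; rewrite core_distE k0 lee_fin => e0.
  by rewrite cardfs_gt0; apply/fset0Pn; exists p; rewrite !inE pY dist_xx.
have [r [_ r0 re kr _]] := core_distP k0 H.
have pin : p \in [fset y in Y | dist p y <= e] by rewrite !inE pY dist_xx (le_trans r0).
rewrite (cardfsD1 p) pin add1n ltnS; apply: leq_trans kr (fsubset_leq_card _).
apply/fsubsetP => z; rewrite !inE => /and3P[zY zp dz].
by rewrite zp zY (le_trans dz).
Qed.

Lemma rhoC Z p q : rho k Z p q = rho k Z q p.
Proof. by rewrite /rho eq_sym distC (maxC (core_dist k Z p)). Qed.

Lemma rhoS Z W p q : Z `<=` W -> (rho k W p q <= rho k Z p q)%E.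
Proof.
by move=> ZW; rewrite /rho; case: eqP => // _; rewrite !le_max2 ?core_distS.
Qed.

End CoreDistance.

Section Clamp.
Context {R : realDomainType}.
Implicit Types lo hi z d : R.

Definition clamp lo hi z := if z < lo then lo else if hi < z then hi else z.

Lemma clamp_itv lo hi z : lo <= hi -> lo <= clamp lo hi z <= hi.
Proof.
rewrite /clamp => lh; case: ltP => [_|zlo]; first by rewrite lexx lh.
by case: ltP => [_|hz]; rewrite ?lexx ?lh // zlo hz.
Qed.

Lemma clamp_dist lo hi z d : lo <= hi -> 0 <= d -> lo - d <= z <= hi + d ->
  `|z - clamp lo hi z| <= d.
Proof.
rewrite /clamp ler_norml => lh d0 /andP[h1 h2].
by case: ltP => [zl|zl]; [|case: ltP => [hz|hz]]; apply/andP; split; lra.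
Qed.

End Clamp.

Section Cubes.
Context {R : realType} {n : nat} {e : R}.
Hypotheses (n_gt0 : (0 < n)%N) (e_gt0 : 0 < e).
Local Notation P := 'rV[R]_n.
Local Notation s := (side n e).
Implicit Types (j t : 'I_n -> int) (x y w : P) (M : R).

Lemma side_gt0 : 0 < s.
Proof. by rewrite divr_gt0 // mulr_gt0 // sqrtr_gt0 ltr0n. Qed.

Lemma in_cubeE j x :
  in_cube e j x <-> (forall i, (j i)%:~R * s <= x 0 i <= (j i)%:~R * s + s).
Proof. by split=> H i; have := H i; rewrite intrD mulrDl mul1r. Qed.

Lemma in_thickE j M x : 0 <= M ->
  in_thick e j M x <->
  (forall i, (j i)%:~R * s - M * s <= x 0 i <= (j i)%:~R * s + s + M * s).
Proof.
move=> M0; have s0 := side_gt0; have Ms : 0 <= M * s by rewrite mulr_ge0 // ltW.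
split.
  case=> w [/in_cubeE wc H] i; have := wc i; have := H i; rewrite ler_norml.
  by move=> /andP[h1 h2] /andP[h3 h4]; apply/andP; split; lra.
move=> H; pose lo i := (j i)%:~R * s.
exists (\row_i clamp (lo i) (lo i + s) (x 0 i)); split => [|i]; rewrite ?mxE.
  by apply/in_cubeE => i; rewrite mxE clamp_itv // lerDl ltW.
by apply: clamp_dist => //; [rewrite lerDl ltW | exact: H].
Qed.

Lemma cube_cover w : exists j, in_cube e j w.
Proof.
have s0 := side_gt0.
exists (fun i => Num.floor (w 0 i / s)); apply/in_cubeE => i.
have /andP[h1 h2] := floor_itv (w 0 i / s).
rewrite intrD /= in h2.
rewrite ler_pdivlMr // in h1; rewrite ltr_pdivrMr // mulrDl mul1r in h2.
by rewrite h1 ltW.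
Qed.

Lemma in_thick0 {j x} : in_thick e j 0 x -> in_cube e j x.
Proof.
move=> /(in_thickE _ _ _ (lexx 0)) H; apply/in_cubeE => i; have := H i.
by rewrite mul0r subr0 addr0.
Qed.

Lemma in_thick_le {j M M' x} : M <= M' -> in_thick e j M x -> in_thick e j M' x.
Proof.
move=> MM [w [wc H]]; exists w; split => // i; apply: le_trans (H i) _.
by rewrite ler_pM2r // side_gt0.
Qed.

Definition neighbour_cube j t := forall i, (t i - 1 <= j i <= t i + 1)%R.

Lemma neighbour_cube_bounds {j t} i : neighbour_cube j t ->
  (t i)%:~R * s - s <= (j i)%:~R * s /\ (j i)%:~R * s <= (t i)%:~R * s + s.
Proof.
have s0 := side_gt0.
move=> /(_ i) /andP[h1 h2]; split.
  by rewrite -{2}(mul1r s) -mulrBl ler_pM2r // -[1]/(1%:~R) -intrB ler_int.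
by rewrite -{3}(mul1r s) -mulrDl ler_pM2r // -[1]/(1%:~R) -intrD ler_int.
Qed.

Lemma in_thick_succ {j M y} : 0 <= M ->
  in_thick e j (M + 1) y -> exists t, neighbour_cube j t /\ in_thick e t M y.
Proof.
have s0 := side_gt0.
move=> M0; have M1 : 0 <= M + 1 by lra.
move=> /(in_thickE j (M + 1) y M1) H.
pose t i := let a := (j i)%:~R * s in
  if a + s + M * s < y 0 i then (j i + 1)%R
  else if y 0 i < a - M * s then (j i - 1)%R else j i.
exists t; split.
  by move=> i; rewrite /t /=; case: ifP => _; [|case: ifP => _]; apply/andP; split; lia.
apply/(in_thickE t M y M0) => i; have := H i; rewrite /t /=.
have Ms : 0 <= M * s by rewrite mulr_ge0 // ltW.
rewrite mulrDl mul1r => /andP[h1 h2].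
case: ifP => [c1|/negbT]; first by rewrite intrD mulrDl mul1r; apply/andP; split; lra.
rewrite -leNgt => c1; case: ifP => [c2|/negbT].
  by rewrite intrB mulrBl mul1r; apply/andP; split; lra.
by rewrite -leNgt => c2; apply/andP; split; lra.
Qed.

Lemma neighbour_cube_sub {j t x} : neighbour_cube j t ->
  in_cube e j x -> in_thick e t 1 x.
Proof.
move=> a /in_cubeE H; apply/in_thickE; first exact: ler01.
move=> i; have /andP[h1 h2] := H i; have [a1 a2] := neighbour_cube_bounds i a.
by rewrite mul1r; apply/andP; split; lra.
Qed.

Lemma neighbour_cubes_meet {j t} : neighbour_cube j t ->
  exists w, in_cube e j w /\ in_cube e t w.
Proof.
have s0 := side_gt0.
move=> a; exists (\row_i ((Num.max (j i) (t i))%:~R * s)).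
split; apply/in_cubeE => i; rewrite mxE; have [a1 a2] := neighbour_cube_bounds i a;
  have [h|/ltW h] := leP (j i) (t i); move: (h);
  rewrite -(ler_int R) -(ler_pM2r s0) => h'; apply/andP; split; lra.
Qed.

End Cubes.

Section DeepPoint.
Context {R : realType} {n : nat} {e : R}.
Hypotheses (n_gt0 : (0 < n)%N) (e_gt0 : 0 < e).
Local Notation P := 'rV[R]_n.
Local Notation s := (side n e).
Context {X C : {fset P}} {y : P} {N : nat}.
Hypothesis yC : y \in C.
Hypothesis y_deep : ~ in_thicken e (in_boundary X e C) N%:R y.

Lemma thick_not_boundary j : in_thick e j (N%:R + 1) y -> ~ boundary_cube X e C j.
Proof.
move=> Hj Hb; have [t [jt Ht]] := in_thick_succ n_gt0 e_gt0 (ler0n _ N) Hj.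
apply: y_deep; exists t; split => //.
have [w [wj wt]] := neighbour_cubes_meet n_gt0 e_gt0 jt.
by exists w; split => //; exists j.
Qed.

(* Induction on the thickness: a cube at distance m + 1 from y neighbours one at
   distance m, which meets C and is not a boundary cube, hence is interior. *)
Lemma thick_meets m : (m <= N.+2)%N -> forall j, in_thick e j m%:R y ->
  meets e j (fun x => x \in C).
Proof.
elim: m => [_ j /(in_thick0 n_gt0 e_gt0) yj|m IH mN j]; first by exists y.
rewrite -natr1 => Hj; have [t [jt Ht]] := in_thick_succ n_gt0 e_gt0 (ler0n _ m) Hj.
have Ct : meets e t (fun x => x \in C) by apply: IH => //; lia.
have [[_ _]|not_int] := pselect (interior_cube X e C t).
  by apply => x; apply: neighbour_cube_sub.
exfalso; apply: (thick_not_boundary t) => //.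
by apply: in_thick_le Ht; rewrite // natr1 ler_nat; lia.
Qed.

Lemma thick_interior j : in_thick e j (N%:R + 1) y -> interior_cube X e C j.
Proof.
move=> Hj; have [//|not_int] := pselect (interior_cube X e C j).
exfalso; apply: (thick_not_boundary _ Hj); split => //.
by apply: (thick_meets N.+1) => //; rewrite -natr1.
Qed.

Lemma box_sub_component {z : P} : z \in X ->
  (forall i, `|z 0 i - y 0 i| <= (N%:R + 2) * s) -> z \in C.
Proof.
have s0 := side_gt0 n_gt0 e_gt0.
move=> zX H; pose r := (N%:R + 1) * s.
have r0 : 0 <= r by apply: mulr_ge0; [rewrite addr_ge0 | exact: ltW].
pose w : P := \row_i clamp (y 0 i - r) (y 0 i + r) (z 0 i).
have [j wj] := cube_cover n_gt0 e_gt0 w.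
have yj : in_thick e j (N%:R + 1) y.
  exists w; split => // i; rewrite /w mxE -/r.
  have := @clamp_itv _ (y 0 i - r) (y 0 i + r) (z 0 i) ltac:(lra).
  by rewrite ler_norml => /andP[c1 c2]; apply/andP; split; lra.
have [_ sub_C _] := thick_interior j yj.
apply: sub_C => //; exists w; split => // i; rewrite /w mxE mul1r.
apply: clamp_dist; [lra | exact: ltW |].
by have := H i; rewrite /r ler_norml !mulrDl mul1r => /andP[h1 h2]; apply/andP; split; lra.
Qed.

Lemma box_near_component {w : P} :
  (forall i, `|w 0 i - y 0 i| <= (N%:R + 2) * s) ->
  exists2 z, z \in C & forall i, `|z 0 i - w 0 i| <= s.
Proof.
move=> H; have [j wj] := cube_cover n_gt0 e_gt0 w.
have [z [zC zj]] : meets e j (fun x => x \in C).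
  apply: (thick_meets N.+2) => //; exists w; split => // i.
  by rewrite distrC -addn2 natrD H.
exists z => // i; move/in_cubeE: wj => /(_ i) /andP[w1 w2].
by move/in_cubeE: zj => /(_ i) /andP[z1 z2]; rewrite ler_norml; apply/andP; split; lra.
Qed.

End DeepPoint.

Section Linked.
Context {T : Type} (r : rel T).

Definition linked (a b : T) := exists s, path r a s /\ last a s = b.

Lemma linked_edge a b : r a b -> linked a b.
Proof. by move=> ab; exists [:: b]; rewrite /= ab. Qed.

Lemma linked_trans a b c : linked a b -> linked b c -> linked a c.
Proof.
move=> [s1 [p1 l1]] [s2 [p2 l2]]; exists (s1 ++ s2).
by rewrite cat_path p1 last_cat l1 p2 l2.
Qed.

Lemma linked_sym a b : symmetric r -> linked a b -> linked b a.
Proof.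
move=> rC [s [ps <-]]; exists (rev (belast a s)); split.
  by rewrite rev_path; apply: sub_path ps => u v; rewrite rC.
by case: s {ps} => //= x s; rewrite rev_cons last_rcons.
Qed.

End Linked.
Arguments linked_edge {T r a b}.
Arguments linked_trans {T r a b c}.
Arguments linked_sym {T r a b}.

Lemma linked_sub (T : Type) (r r' : rel T) a b :
  subrel r r' -> linked r a b -> linked r' a b.
Proof. by move=> rr' [s [ps ls]]; exists s; split => //; apply: sub_path ps. Qed.

Section FoldrMin.
Context {d : Order.disp_t} {U : orderType d} {T : eqType} {top : U} {f : T -> U}.
Local Open Scope order_scope.

Lemma foldr_min_le {s : seq T} {x} : x \in s ->
  foldr (fun C acc => Order.min (f C) acc) top s <= f x.
Proof.
elim: s => //= C s IH; rewrite inE ge_min => /orP[/eqP ->|/IH ->]; last exact: orbT.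
by rewrite lexx.
Qed.

Lemma le_foldr_min (s : seq T) (u : U) : u <= top -> (forall C, C \in s -> u <= f C) ->
  u <= foldr (fun C acc => Order.min (f C) acc) top s.
Proof.
move=> utop; elim: s => //= C s IH H.
by rewrite le_min H ?mem_head // IH // => D Ds; rewrite H // inE Ds orbT.
Qed.

End FoldrMin.

Section Components.
Local Open Scope fset_scope.
Context {R : realType} {n k : nat}.
Implicit Types (Y C : {fset 'rV[R]_n}) (p q : 'rV[R]_n) (e : R).

Lemma in_component {Y e p q} :
  (q \in component k Y e p) <-> (q \in core_pts k Y e) /\ reach k Y e p q.
Proof. by rewrite !inE; split => [/andP[-> /asboolP]|[-> /asboolP]]. Qed.

Lemma component_mem {Y e p} : p \in core_pts k Y e -> component k Y e p \in components k Y e.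
Proof. exact: in_imfset. Qed.

Lemma component_self {Y e p} : p \in core_pts k Y e -> p \in component k Y e p.
Proof. by move=> pc; apply/in_component; split => //; exists [::]. Qed.

Lemma core_pts_sub {Y e} : {subset core_pts k Y e <= Y}.
Proof. by move=> p; rewrite !inE => /andP[]. Qed.

Lemma components_sub {Y e C} : C \in components k Y e -> {subset C <= Y}.
Proof. by move=> /imfsetP [p _ ->] q /in_component [/core_pts_sub]. Qed.

End Components.

Section Construction.
Local Open Scope fset_scope.
Context {R : realType} {n : nat}.
Variables (k : nat) (X : {fset 'rV[R]_n}) (eps : nat -> R).
Local Notation P := 'rV[R]_n.
Implicit Types (Y Z C : {fset P}) (p q : P) (e : R).

Lemma Xs_subX j : Xs k X eps j `<=` X.
Proof.
elim: j => [|j IH] /=; first exact: fsubset_refl.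
by apply: fsubset_trans IH; apply/fsubsetP => x; rewrite !inE => /andP[].
Qed.

Lemma gwC Z e p q : gw k Z e p q = gw k Z e q p.
Proof. by rewrite /gw rhoC eq_sym; case: (p \in Z); case: (q \in Z). Qed.

Lemma HwC i p q : Hw k X eps i p q = Hw k X eps i q p.
Proof.
elim: i => [//|i IH] /=; rewrite IH; congr Order.min.
by elim: (enum_fset _) => //= C s ->; rewrite gwC.
Qed.

Lemma H_edgeC i alpha : symmetric (H_edge k X eps i alpha).
Proof. by move=> p q; rewrite /H_edge HwC eq_sym; case: (p \in X); case: (q \in X). Qed.

Lemma le_Hw i j p q : (j <= i)%N -> (Hw k X eps i p q <= Hw k X eps j p q)%E.
Proof.
elim: i => [|i IH]; first by rewrite leqn0 => /eqP ->.
rewrite leq_eqVlt => /orP[/eqP ->//|/IH]; apply: le_trans.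
by rewrite /= ge_min lexx.
Qed.

Lemma rho_le_Hw i p q : (rho k X p q <= Hw k X eps i p q)%E.
Proof.
elim: i => [|i IH] /=; first exact: leey.
rewrite le_min IH /=; apply: le_foldr_min => [|C _]; first exact: leey.
rewrite /gw; case: ifP => _; last exact: leey.
apply: rhoS; apply: fsubset_trans (Xs_subX i).
by apply/fsubsetP => x; rewrite !inE => /andP[].
Qed.

(* B(C) contains the beta-neighbourhood of every point of C, so core distances
   at most beta are still at most beta in B(C). *)
Lemma Hw_component_le {l C a b} {beta : R} :
  C \in components k (Xs k X eps l) (eps l.+1) -> a \in C -> b \in C -> a != b ->
  0 <= beta <= eps l.+1 -> dist a b <= beta ->
  (core_dist k (Xs k X eps l) a <= beta%:E)%E ->
  (core_dist k (Xs k X eps l) b <= beta%:E)%E ->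
  (Hw k X eps l.+1 a b <= beta%:E)%E.
Proof.
move=> Ccomp aC bC ab /andP[beta0 beta_e] dab ca cb.
set Y := Xs k X eps l; set Z := ballC Y C (eps l.+1).
have CY := components_sub Ccomp.
have inZ c x : c \in C -> x \in Y -> dist x c <= beta -> x \in Z.
  by move=> cC xY dxc; rewrite !inE xY; apply/hasP; exists c => //; apply: le_trans beta_e.
have aZ : a \in Z by apply: (inZ a); rewrite ?CY ?dist_xx.
have bZ : b \in Z by apply: (inZ b); rewrite ?CY ?dist_xx.
have coreZ c : c \in C -> (core_dist k Y c <= beta%:E)%E -> (core_dist k Z c <= beta%:E)%E.
  move=> cC cc; apply: (core_dist_le_ball _ _ _ _ beta0 cc) => x xY dx.
  by apply: (inZ c); rewrite // distC.
have rZ : (rho k Z a b <= beta%:E)%E.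
  by rewrite /rho (negbTE ab) !ge_max lee_fin dab !coreZ.
rewrite /= ge_min; apply/orP; right; apply: le_trans (foldr_min_le Ccomp) _.
by rewrite /gw aZ bZ ab (le_trans rZ) ?lee_fin.
Qed.

End Construction.

Section Levels.
Context {R : realType} {n : nat}.
Variables (k : nat) (X : {fset 'rV[R]_n}) (eps : nat -> R).
Hypotheses (n_gt0 : (0 < n)%N) (eps0 : eps 0%N = 0) (eps_lt : forall j, eps j < eps j.+1).
Local Notation P := 'rV[R]_n.

Lemma eps_le : {homo eps : a b / (a <= b)%N >-> a <= b}.
Proof. exact: homo_leq lexx le_trans (fun j => ltW (eps_lt j)). Qed.

Lemma eps_gt0 j : 0 < eps j.+1.
Proof. by rewrite -eps0; apply: lt_le_trans (eps_lt 0) (eps_le _ _ _). Qed.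

Definition frak_N_nat : nat := `|frak_N R n|%N.

Lemma sqrtn_ge1 : 1 <= Num.sqrt (n%:R : R).
Proof. by rewrite -{1}sqrtr1 ler_wsqrtr // ler1n. Qed.

Lemma frak_N_natE : (frak_N R n)%:~R = frak_N_nat%:R :> R.
Proof.
have := sqrtn_ge1 => sq1.
have : (0 <= frak_N R n)%R by rewrite addr_ge0 // ceil_ge0; lra.
by rewrite /frak_N_nat; case: (frak_N R n).
Qed.

(* With cube side s = eps / (2 sqrt n), a box of frak_N + 2 cubes reaches
   further than eps plus one cube diagonal sqrt n * s. *)
Lemma frak_N_large : 3 * Num.sqrt (n%:R : R) < frak_N_nat%:R + 2.
Proof.
rewrite -frak_N_natE /frak_N /frak_n /frak_m intrD.
have := ceil_ge (Num.sqrt (n%:R : R) - 1); have := ceil_ge (2 * Num.sqrt (n%:R : R)).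
lra.
Qed.

Lemma removed_level {x j} : x \in X -> x \notin Xs k X eps j ->
  exists l, [/\ (l < j)%N, x \in Xs k X eps l & x \notin Xs k X eps l.+1].
Proof.
move=> xX; elim: j => [|j IH]; first by rewrite /= xX.
have [xj xj1|/IH [l [lj h1 h2]] _] := boolP (x \in Xs k X eps j); first by exists j.
by exists l; split => //; apply: ltnW.
Qed.

Section RemovedPoint.
Context {l : nat} {y : P}.
Hypotheses (yY : y \in Xs k X eps l) (y_removed : y \notin Xs k X eps l.+1).
Local Notation Y := (Xs k X eps l).
Local Notation e := (eps l.+1).
Local Notation C := (component k Y e y).
Local Notation s := (side n e).

Lemma removed_core_deep :
  y \in core_pts k Y e /\ ~ in_thicken e (in_boundary X e C) frak_N_nat%:R y.
Proof.
have y_not_F := y_removed; rewrite /= !inE yY /= in y_not_F.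
move/asboolPn: y_not_F => y_not_F.
have yc : y \in core_pts k Y e.
  by rewrite !inE yY /=; apply/negPn/negP => ync; apply: y_not_F; left; rewrite ync.
split => // y_thick; apply: y_not_F; right; exists C.
by rewrite component_mem // component_self // frak_N_natE.
Qed.

Lemma removed_scales : [/\ 0 < s, e = 2 * Num.sqrt (n%:R : R) * s &
  3 * Num.sqrt (n%:R : R) * s < (frak_N_nat%:R + 2) * s].
Proof.
have s0 := side_gt0 n_gt0 (eps_gt0 l).
have sq0 : 0 < Num.sqrt (n%:R : R) by have := sqrtn_ge1; lra.
split => //; first by rewrite /side; field; rewrite gt_eqF.
by rewrite ltr_pM2r // frak_N_large.
Qed.

Let K := (frak_N_nat%:R + 2) * s.

(* As q is outside C, it is outside the box of radius K around y, while p is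
   within eps of y; so the point c of [p, q] at distance K - eps from p lies in
   the box, within one cube diagonal sqrt n * s < K - eps of some z in C. *)
Lemma component_closer {p q} : p \in C -> dist p y <= e -> q \in X -> q \notin C ->
  exists2 z, z \in C & dist z q < dist p q.
Proof.
move=> pC py qX qC; have [yc y_deep] := removed_core_deep.
have yC := component_self yc.
have [s0 es Kbig] := removed_scales; rewrite -/K in Kbig.
have sq0 : 0 < Num.sqrt (n%:R : R) by have := sqrtn_ge1; lra.
have [/forallP qbox|] := boolP [forall i, `|q 0 i - y 0 i| <= K].
  by rewrite (box_sub_component n_gt0 (eps_gt0 l) yC y_deep qX qbox) in qC.
move=> /forallPn [i0]; rewrite -ltNge => Ki0.
set d := dist p q; set t := K - e.
have dt : t < d.
  have h1 := coord_le_dist p q i0; have h2 := coord_le_dist p y i0.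
  have h3 := ler_distD (p 0 i0) (q 0 i0) (y 0 i0).
  by rewrite distrC -/d in h1; rewrite /t; lra.
have t_diag : Num.sqrt (n%:R : R) * s < t by rewrite /t; lra.
have sqs : 0 <= Num.sqrt (n%:R : R) * s by rewrite mulr_ge0 ?sqrtr_ge0 // ltW.
have d0 : 0 < d by lra.
set lam := t / d.
have lamd : lam * d = t by rewrite /lam divfK // gt_eqF.
have lam01 : 0 <= lam <= 1.
  by rewrite divr_ge0 ?ler_pdivrMr ?mul1r; lra.
have /andP[lam0 lam1] := lam01.
set c := segment p q lam.
have c_box i : `|c 0 i - y 0 i| <= K.
  have h1 := segment_coord p q lam i lam0; rewrite -/c -/d lamd in h1.
  have h2 := coord_le_dist p y i.
  have h3 := ler_distD (p 0 i) (c 0 i) (y 0 i); rewrite /t in h1; lra.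
have [z zC zc] := box_near_component n_gt0 (eps_gt0 l) yC y_deep c_box.
exists z => //.
have h1 := dist_le_coord (ltW s0) zc.
have h2 : dist c q = d - t by rewrite dist_segment // mulrBl mul1r lamd.
have h3 := dist_triangle z c q; lra.
Qed.

(* Inside the box p belongs to C.  Outside it, the point c at distance K from y
   on [y, p] is within one cube of a core point z of C, and the more than k points
   within eps of z all lie strictly within r of p, where at most k are allowed. *)
Lemma sparse_in_component {p r} : p \in X -> k != 0%N -> dist p y <= r ->
  (#|` [fset x in X | (x != p) && (dist p x < r)%R]%fset| <= k.-1)%N -> p \in C.
Proof.
move=> pX k0 py sparse; have [yc y_deep] := removed_core_deep.
have yC := component_self yc.
have [s0 es Kbig] := removed_scales; rewrite -/K in Kbig.
have sq0 : 0 < Num.sqrt (n%:R : R) by have := sqrtn_ge1; lra.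
have [/forallP pbox|] := boolP [forall i, `|p 0 i - y 0 i| <= K].
  exact: (box_sub_component n_gt0 (eps_gt0 l) yC y_deep pX pbox).
move=> /forallPn [i0]; rewrite -ltNge => Ki0.
apply/negPn/negP => pC.
set d := dist p y in py *.
have dK : K < d by have := coord_le_dist p y i0; rewrite /d; lra.
have sqs : 0 <= Num.sqrt (n%:R : R) * s by rewrite mulr_ge0 ?sqrtr_ge0 // ltW.
have d0 : 0 < d by lra.
set lam := K / d.
have lamd : lam * d = K by rewrite /lam divfK // gt_eqF.
have lam01 : 0 <= lam <= 1 by rewrite divr_ge0 ?ler_pdivrMr ?mul1r; lra.
have /andP[lam0 lam1] := lam01.
set c := segment y p lam.
have c_box i : `|c 0 i - y 0 i| <= K.
  by have := segment_coord y p lam i lam0; rewrite -/c distC -/d lamd.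
have [z zC zc] := box_near_component n_gt0 (eps_gt0 l) yC y_deep c_box.
have h1 := dist_le_coord (ltW s0) zc.
have h2 : dist c p = d - K by rewrite dist_segment // mulrBl mul1r distC -/d lamd.
move/in_component: zC => [+ _]; rewrite !inE => /andP[_].
apply/negP; rewrite -leqNgt.
apply: leq_trans (_ : (#|` (p |` [fset x in X | (x != p) && (dist p x < r)%R])%fset| <= _)%N).
  apply: fsubset_leq_card; apply/fsubsetP => x; rewrite !inE => /andP[xY dx].
  case: eqP => //= xp; rewrite (fsubsetP (Xs_subX k X eps l)) //=.
  have h3 := dist_triangle p c x; have h4 := dist_triangle c z x.
  by rewrite (distC c z) in h4; rewrite (distC p c) h2 in h3; lra.
rewrite cardfsU1; apply: leq_trans (leq_add (leq_b1 _) sparse) _.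
by rewrite add1n prednK // lt0n.
Qed.

End RemovedPoint.

Definition closer (p q : P) :=
  count (< dist p q) [seq dist a b | a <- enum_fset X, b <- enum_fset X].

Lemma closer_lt {a b c d} : a \in X -> b \in X -> dist a b < dist c d ->
  (closer a b < closer c d)%N.
Proof.
move=> aX bX ab_cd.
apply: (@leq_trans (count (<= dist a b) [seq dist u v | u <- enum_fset X, v <- enum_fset X])).
  by rewrite count_lt_le_mem; apply/allpairsP; exists (a, b).
by apply: sub_count => x /= /le_lt_trans; apply.
Qed.

Section Main.
Variables (i : nat) (alpha : R).
Hypotheses (eps_alpha : eps i < alpha) (alpha_eps : alpha <= eps i.+1).
Local Notation Xi := (Xs k X eps i).
Local Notation HE := (H_edge k X eps i.+1 alpha).

Lemma alpha_ge0 : 0 <= alpha.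
Proof. by apply/ltW/(le_lt_trans _ eps_alpha); rewrite -eps0 eps_le. Qed.

Lemma core_level_le_X {l z} : z \in core_pts k (Xs k X eps l) (eps l.+1) ->
  (core_dist k X z <= (eps l.+1)%:E)%E.
Proof.
move=> zc; apply: le_trans (core_pts_dist (ltW (eps_gt0 l)) zc).
exact: core_distS (Xs_subX k X eps l).
Qed.

Lemma level_edge {l a b} : (l < i)%N ->
  core_edge k (Xs k X eps l) (eps l.+1) a b -> HE a b.
Proof.
move=> li /and4P[ac bc ab dab].
have e0 := ltW (eps_gt0 l).
have sX := fsubsetP (Xs_subX k X eps l).
have /core_pts_sub aY := ac; have /core_pts_sub bY := bc.
rewrite /H_edge ab !sX //=.
have bC : b \in component k (Xs k X eps l) (eps l.+1) a.
  by apply/in_component; split => //; exists [:: b]; rewrite /= andbT /core_edge ac bc ab.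
have Hw_le : (Hw k X eps l.+1 a b <= (eps l.+1)%:E)%E.
  apply: (Hw_component_le k X eps (component_mem ac) (component_self ac) bC ab);
    by rewrite ?e0 ?lexx ?core_pts_dist.
apply: le_trans (le_Hw k X eps i.+1 l.+1 a b (ltnW li)) (le_trans Hw_le _).
by rewrite lee_fin ltW // (le_lt_trans (eps_le _ _ li)).
Qed.

Lemma level_linked {l y z} : (l < i)%N -> y \in core_pts k (Xs k X eps l) (eps l.+1) ->
  z \in component k (Xs k X eps l) (eps l.+1) y -> linked HE y z.
Proof.
move=> li yc /in_component [_ [s [ps ls]]].
apply: (@linked_sub _ (core_edge k (Xs k X eps l) (eps l.+1))) => [u v|].
  exact: level_edge.
by exists s.
Qed.

Lemma surviving_edge {p q} : p \in Xi -> q \in Xi ->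
  (core_dist k Xi p <= alpha%:E)%E -> (core_dist k Xi q <= alpha%:E)%E ->
  dist p q <= alpha -> p != q -> HE p q.
Proof.
move=> pXi qXi cp cq dpq pq.
have alpha_e : (alpha%:E <= (eps i.+1)%:E)%E by rewrite lee_fin.
have pc := dist_core_pts pXi (le_trans cp alpha_e).
have qc := dist_core_pts qXi (le_trans cq alpha_e).
have qC : q \in component k Xi (eps i.+1) p.
  apply/in_component; split => //; exists [:: q].
  by rewrite /= andbT /core_edge pc qc pq (le_trans dpq).
have sX := fsubsetP (Xs_subX k X eps i).
rewrite /H_edge pq !sX //=.
by apply: (Hw_component_le k X eps (component_mem pc) (component_self pc) qC pq); rewrite ?alpha_ge0.
Qed.

Definition survives p := (p \in Xi) && (core_dist k Xi p <= alpha%:E)%E.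

Lemma deficient_point {p} : p \in X -> (core_dist k X p <= alpha%:E)%E -> ~~ survives p ->
  exists l y, [/\ (l < i)%N, y \in Xs k X eps l, y \notin Xs k X eps l.+1,
    p \in component k (Xs k X eps l) (eps l.+1) y & dist p y <= eps l.+1].
Proof.
move=> pX cp; rewrite negb_and => /orP[pXi|cpXi].
  have [l [li pl pl1]] := removed_level pX pXi; exists l, p; split => //.
    exact/component_self/(removed_core_deep pl pl1).1.
  by rewrite dist_xx ltW // eps_gt0.
have [k0|k0] := eqVneq k 0%N.
  by move: cpXi; rewrite core_distE k0 lee_fin alpha_ge0.
have [r [cr r0 ra kr sparse]] := core_distP k0 cp.
have [[y [yX yp py yXi]]|all_in] :=
  pselect (exists y, [/\ y \in X, y != p, dist p y <= r & y \notin Xi]).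
  have [l [li yl yl1]] := removed_level yX yXi.
  have pC := sparse_in_component yl yl1 pX k0 py sparse.
  exists l, y; split => //; apply: le_trans py _.
  move/in_component: pC => [/core_level_le_X].
  by rewrite cr lee_fin.
exfalso; move/negP: cpXi; apply; apply: le_trans (_ : r%:E <= _)%E; last by rewrite lee_fin.
apply: core_dist_le r0 (leq_trans kr (fsubset_leq_card _)).
apply/fsubsetP => z; rewrite !inE => /and3P[zX zp dz]; rewrite zp dz /= andbT.
by apply/negPn/negP => zXi; apply: all_in; exists z.
Qed.

Lemma deficient_step {p q} : p \in X -> q \in X -> (core_dist k X p <= alpha%:E)%E ->
  ~~ survives p ->
  linked HE p q \/ exists z, [/\ z \in X, linked HE p z, dist z q < dist p q,
     (core_dist k X z <= alpha%:E)%E & z != q].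
Proof.
move=> pX qX cp dp.
have [l [y [li yl yl1 pC py]]] := deficient_point pX cp dp.
have [yc _] := removed_core_deep yl yl1.
have yp := linked_sym (H_edgeC k X eps i.+1 alpha) (level_linked li yc pC).
have [qC|qC] := boolP (q \in component k (Xs k X eps l) (eps l.+1) y).
  by left; apply: linked_trans yp (level_linked li yc qC).
right; have [z zC dz] := component_closer yl yl1 pC py qX qC.
have [zc _] := in_component.1 zC.
exists z; split => //.
- by move/core_pts_sub/(fsubsetP (Xs_subX k X eps l)): zc.
- exact: linked_trans yp (level_linked li yc zC).
- apply: le_trans (core_level_le_X zc) _; rewrite lee_fin.
  exact: ltW (le_lt_trans (eps_le _ _ li) eps_alpha).
- by apply: contraNneq qC => <-.
Qed.

Lemma rho_edge_linked p q : p \in X -> q \in X -> p != q ->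
  (core_dist k X p <= alpha%:E)%E -> (core_dist k X q <= alpha%:E)%E ->
  dist p q <= alpha -> linked HE p q.
Proof.
have [m] := ubnP (closer p q); elim: m p q => // m IH p q /ltnSE pq_m.
move=> pX qX pq cp cq dpq.
have HEC := H_edgeC k X eps i.+1 alpha.
have [sp|dp] := boolP (survives p); last first.
  have [//|[z [zX pz dz cz zq]]] := deficient_step pX qX cp dp.
  apply: linked_trans pz (IH z q _ zX qX zq cz cq (le_trans (ltW dz) dpq)).
  exact: leq_trans (closer_lt zX qX dz) pq_m.
have [sq|dq] := boolP (survives q); last first.
  have [qp|[z [zX qz dz cz zp]]] := deficient_step qX pX cq dq.
    exact: linked_sym HEC qp.
  rewrite (distC z) (distC q) in dz.
  apply: linked_trans (IH p z _ pX zX _ cp cz (le_trans (ltW dz) dpq)) (linked_sym HEC qz).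
    exact: leq_trans (closer_lt pX zX dz) pq_m.
  by rewrite eq_sym.
move: sp sq => /andP[pXi cpi] /andP[qXi cqi].
exact/linked_edge/surviving_edge.
Qed.

End Main.
End Levels.

Local Open Scope fset_scope.

Theorem lemma5p8 (R : realType) (n : nat) (hn : (2 <= n)%N)
    (X : {fset 'rV[R]_n}) (k : nat) (eps : nat -> R)
    (heps0 : eps 0%N = 0) (heps : forall j, eps j < eps j.+1)
    (i : nat) (alpha : R) (h1 : eps i.-1 < alpha) (h2 : alpha <= eps i) :
  (forall p q, H_edge k X eps i alpha p q -> G_edge k X alpha p q) /\
  (forall p q, G_edge k X alpha p q ->
     exists s : seq 'rV[R]_n, path (H_edge k X eps i alpha) p s /\ last p s = q).
Proof.
case: i h1 h2 => [|i] /= h1 h2; first by have := lt_le_trans h1 h2; rewrite ltxx.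
split=> p q /and4P[pX qX pq].
  by move=> Hpq; rewrite /G_edge pX qX pq (le_trans (rho_le_Hw k X eps i.+1 p q)).
rewrite /rho (negbTE pq) !ge_max lee_fin => /andP[/andP[cp cq] dpq].
have n_gt0 : (0 < n)%N by apply: leq_trans hn.
exact: (rho_edge_linked k X eps n_gt0 heps0 heps i alpha h1 h2 p q pX qX pq cp cq dpq).
Qed.
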